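(* Every statistically compact metric space is compact.
   Context: For $A\subseteq\mathbb{N}$ let $d_n(A)=|A\cap\{1,\dots,n\}|/n$, $\overline{d}(A)=\limsup_n d_n(A)$, $\underline{d}(A)=\liminf_n d_n(A)$, and $d(A)$ their common value when equal. A sequence in $X$ is a map from an infinite subset $M\subseteq\mathbb{N}$ into $X$, written $(x_n)_{n\in M}$; a subsequence is $(x_n)_{n\in N}$ with $N\subseteq M$ infinite. It is nonthin if $\overline{d}(M)>0$. A nonthin sequence $(x_n)_{n\in M}$ is statistically convergent to $a\in X$ if for every open $U\ni a$, $d(\{n\in M:x_n\notin U\})=0$. A topological space $X$ is statistically compact if every nonthin sequence in $X$ has a nonthin subsequence that is statistically convergent to some point of $X$. *)

From HB Require Import structures.
From mathcomp Require Import all_boot all_order all_algebra.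
From mathcomp Require Import all_classical all_reals all_analysis.
Set Implicit Arguments. Unset Strict Implicit. Unset Printing Implicit Defensive.
Import Order.TTheory GRing.Theory Num.Theory.
Import numFieldNormedType.Exports.
Local Open Scope classical_set_scope.
Local Open Scope ring_scope.

Definition dens_n (R : realType) (A : set nat) (n : nat) : R :=
  (\sum_(1 <= i < n.+1) (asbool (A i))%:R) / n%:R.

Definition upper_dens (R : realType) (A : set nat) : \bar R :=
  limn_esup (fun n => (dens_n R A n)%:E).

Definition dens_zero (R : realType) (A : set nat) : Prop :=
  dens_n R A @ \oo --> (0 : R).

(* A sequence in X is a pair (M, x) with M an infinite subset of nat and
   x : nat -> X (only the values on M matter).  It is nonthin if
   \overline{d}(M) > 0 (which forces M to be infinite). *)
Definition nonthin (R : realType) (M : set nat) : Prop :=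
  infinite_set M /\ (0 < upper_dens R M)%E.

Definition stat_conv (R : realType) (X : topologicalType)
    (M : set nat) (x : nat -> X) (a : X) : Prop :=
  nonthin R M /\
  forall U : set X, open U -> U a -> dens_zero R [set n | M n /\ ~ U (x n)].

Definition stat_compact (R : realType) (X : topologicalType) : Prop :=
  forall (M : set nat) (x : nat -> X), nonthin R M ->
    exists N : set nat, N `<=` M /\ nonthin R N /\
      exists a : X, stat_conv R N x a.

From HB Require Import structures.
From mathcomp Require Import all_boot all_order all_algebra.
From mathcomp Require Import all_classical all_reals all_analysis.
From mathcomp Require Import zify.
Set Implicit Arguments. Unset Strict Implicit. Unset Printing Implicit Defensive.
Import Order.TTheory GRing.Theory Num.Theory.
Import numFieldNormedType.Exports.
Local Open Scope classical_set_scope.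
Local Open Scope ring_scope.

(* A nonthin subsequence converging statistically to a cannot avoid a
   neighbourhood of a from some index on, since a set of positive upper density
   is not eventually contained in a set of density zero.  Hence every sequence
   in a statistically compact space has a cluster point.  In a metric space
   this forces compactness: an ultrafilter contains a ball of every radius r
   (otherwise a greedy sequence of points pairwise at distance >= r would have
   no cluster point), and a cluster point of the centres of balls of radii
   1/(k+1) in the ultrafilter is its limit. *)

Lemma count_le_eventually_sub (N A : set nat) (m : nat) :
  (forall n, (m <= n)%N -> N n -> A n) -> forall n,
  (\sum_(1 <= i < n.+1) (asbool (N i) : nat) <=
   \sum_(1 <= i < n.+1) (asbool (A i) : nat) + minn n m)%N.
Proof.
move=> NA; elim=> [|n IH]; first by rewrite !big_geq.
rewrite !(big_nat_recr n.+1) //=.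
have [mn|nm] := leqP m n.+1.
  have NAn : (asbool (N n.+1) <= asbool (A n.+1))%N.
    by case: (asboolP (N n.+1)) => // /(NA _ mn) An; rewrite asboolT.
  have : (minn n m <= minn n.+1 m)%N by lia.
  lia.
have : (asbool (N n.+1) <= 1)%N by case: asboolP.
have : minn n.+1 m = (minn n m).+1 by lia.
lia.
Qed.

Section density.
Variable R : realType.

Lemma dens_n_le_eventually_sub (N A : set nat) (m : nat) :
  (forall n, (m <= n)%N -> N n -> A n) -> forall n,
  dens_n R N n <= dens_n R A n + m%:R / n%:R.
Proof.
move=> NA n; rewrite /dens_n -mulrDl ler_wpM2r ?invr_ge0 ?ler0n //.
rewrite -!natr_sum -natrD ler_nat.
apply: (leq_trans (count_le_eventually_sub NA n)); rewrite leq_add2l; lia.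
Qed.

Lemma cvg_natr_div (m : nat) : (m%:R / n%:R : R) @[n --> \oo] --> 0.
Proof.
rewrite -(mulr0 m%:R); apply: cvgMl_tmp.
apply/gtr0_cvgV0; last exact: cvgr_idn.
by near=> n; rewrite ltr0n; near: n; exists 1%N.
Unshelve. all: end_near. Qed.

Lemma dens_zero_eventually_sub (N A : set nat) (m : nat) :
  (forall n, (m <= n)%N -> N n -> A n) -> dens_zero R A -> dens_zero R N.
Proof.
move=> NA A0; apply: (@squeeze_cvgr _ _ _ _ (fun=> 0)
  (fun n => dens_n R A n + m%:R / n%:R)); last 2 first.
- exact: cvg_cst.
- by rewrite -[0 : R]addr0; apply: cvgD => //; exact: cvg_natr_div.
near=> n; rewrite dens_n_le_eventually_sub // andbT.
by rewrite /dens_n divr_ge0 // sumr_ge0.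
Unshelve. all: end_near. Qed.

Lemma upper_dens_dens_zero (A : set nat) : dens_zero R A -> upper_dens R A = 0%E.
Proof.
move=> A0; apply: (cvg_limn_einf_sup _).2.
by apply/fine_cvgP; split; [exact: nearW|exact: A0].
Qed.

Lemma nonthin_not_dens_zero (N : set nat) : nonthin R N -> ~ dens_zero R N.
Proof. by move=> [_ N_gt0] /upper_dens_dens_zero N0; rewrite N0 ltxx in N_gt0. Qed.

Lemma dens_n_setT (n : nat) : (0 < n)%N -> dens_n R [set: nat] n = 1.
Proof.
move=> n_gt0; rewrite /dens_n (eq_bigr (fun=> 1)) => [|i _]; last by rewrite asboolT.
by rewrite sumr_const_nat subn1 divff // pnatr_eq0 -lt0n.
Qed.

Lemma nonthin_setT : nonthin R [set: nat].
Proof.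
split; first exact: infinite_nat.
suff -> : upper_dens R [set: nat] = 1%E by rewrite lte01.
apply: (cvg_limn_einf_sup _).2; apply: (cvg_near_cst 1%E).
by near=> n; rewrite dens_n_setT //; near: n; exists 1%N.
Unshelve. all: end_near. Qed.

End density.

Lemma cluster_seqP (T : topologicalType) (x : nat -> T) (a : T) :
  cluster (x @ \oo) a <->
  forall U, nbhs a U -> forall m, exists2 n, (m <= n)%N & U (x n).
Proof.
split=> [xa U aU m | xa A U [m _ mA] aU].
  have xm : (x @ \oo) (x @` [set n | (m <= n)%N]) by exists m => // n mn; exists n.
  by have [_ [[n mn <-] Uxn]] := xa _ _ xm aU; exists n.
by have [n mn Uxn] := xa U aU m; exists (x n); split => //; exact: mA.
Qed.

Lemma stat_conv_cluster (R : realType) (X : topologicalType)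
    (N : set nat) (x : nat -> X) (a : X) :
  stat_conv R N x a -> cluster (x @ \oo) a.
Proof.
move=> [Nthin conv]; apply/cluster_seqP => U aU m; apply: contrapT => noU.
apply: (nonthin_not_dens_zero Nthin).
apply: (@dens_zero_eventually_sub R _ [set n | N n /\ ~ U° (x n)] m).
  move=> n mn Nn; split => // /interior_subset Uxn.
  by apply: noU; exists n.
exact: conv _ (@open_interior _ U) aU.
Qed.

Lemma stat_compact_cluster (R : realType) (X : topologicalType) :
  stat_compact R X -> forall x : nat -> X, exists a, cluster (x @ \oo) a.
Proof.
move=> Xc x; have [N [_ [_ [a xa]]]] := Xc _ x (nonthin_setT R).
by exists a; exact: stat_conv_cluster xa.
Qed.

Section cluster_compact.
Variables (R : realType) (X : pseudoMetricType R).

Lemma separated_seq_not_cluster (r : R) (x : nat -> X) (a : X) : 0 < r ->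
  (forall i j, (i < j)%N -> ~ ball (x i) r (x j)) -> ~ cluster (x @ \oo) a.
Proof.
move=> r_gt0 xsep /cluster_seqP xa.
have r2_gt0 : 0 < r / 2 by rewrite divr_gt0.
have [i _ axi] := xa _ (nbhsx_ballx a _ r2_gt0) 0%N.
have [j ij axj] := xa _ (nbhsx_ballx a _ r2_gt0) i.+1.
apply: (xsep _ _ ij); rewrite [r]splitr.
exact: ball_triangle (ball_sym axi) axj.
Qed.

Lemma greedy_separated_seq (r : R) :
  (forall s : seq X, exists y, forall c, c \in s -> ~ ball c r y) ->
  exists x : nat -> X, forall i j, (i < j)%N -> ~ ball (x i) r (x j).
Proof.
move=> /(_ _)/cid avoid; pose g s := projT1 (avoid s).
pose L := fix L n := if n is n'.+1 then g (L n') :: L n' else [::].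
have L_prev n i : (i < n)%N -> g (L i) \in L n.
  elim: n => // n IH; rewrite ltnS leq_eqVlt => /orP[/eqP->|/IH iL].
    by rewrite in_cons eqxx.
  by rewrite in_cons iL orbT.
by exists (g \o L) => i j /L_prev; exact: (projT2 (avoid (L j))).
Qed.

Hypothesis seq_cluster : forall x : nat -> X, exists a, cluster (x @ \oo) a.

Lemma ultra_ball_mem (F : set_system X) (r : R) :
  UltraFilter F -> 0 < r -> exists c, F (ball c r).
Proof.
move=> FU r_gt0; apply: contrapT => noball.
have Fout c : F (~` ball c r).
  by case: (in_ultra_setVsetC (ball c r) FU) => // Fb; exfalso; apply: noball; exists c.
have : forall s : seq X, exists y, forall c, c \in s -> ~ ball c r y.
  move=> s; suff /filter_ex[y sy] : F [set y | forall c, c \in s -> ~ ball c r y].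
    by exists y.
  elim: s => [|c s IH]; first exact: filterS filterT.
  apply: filterS (filterI (Fout c) IH) => y [cy sy] c'.
  by rewrite in_cons => /orP[/eqP->|/sy].
move=> /greedy_separated_seq[x xsep]; have [a xa] := seq_cluster x.
exact: separated_seq_not_cluster r_gt0 xsep xa.
Qed.

Lemma ultra_cvg (F : set_system X) : UltraFilter F -> exists a : X, F --> a.
Proof.
move=> FU; have /choice[c Fc] : forall k : nat, exists c, F (ball c k.+1%:R^-1).
  by move=> k; apply: ultra_ball_mem; rewrite invr_gt0 ltr0n.
have [a /cluster_seqP ca] := seq_cluster c; exists a.
move=> U /nbhs_ballP[e /= e_gt0 aeU]; change (F U).
have e2_gt0 : 0 < e / 2 by rewrite divr_gt0.
have [m _ small] : \forall k \near \oo, `|0 - @harmonic R k| < e / 2.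
  exact: (cvgr_dist_lt _ _ cvg_harmonic).
have [n mn acn] := ca _ (nbhsx_ballx a _ e2_gt0) m.
apply: filterS (Fc n) => y cny; apply: aeU; rewrite [e]splitr.
apply: ball_triangle acn (le_ball _ cny).
have := small n mn; rewrite /= sub0r normrN ger0_norm ?invr_ge0 ?ler0n //.
exact: ltW.
Qed.

Lemma cluster_compact : compact [set: X].
Proof.
rewrite compact_ultra => F FU _; have [a Fa] := ultra_cvg FU.
by exists a.
Qed.

End cluster_compact.

Theorem mainTheorem7 (R : realType) (X : metricType R) :
  stat_compact R X -> compact [set: X].
Proof. by move=> /stat_compact_cluster; exact: cluster_compact. Qed.
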